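(* Let $n\ge 3$ and $\mathbf h\in\mathbb{R}^{\binom{n+1}{2}}$, decomposed as $\mathbf h=(\mathbf h_0,\mathbf h_1,\mathbf h_2)$. Assume $J_{n,2}\mathbf h\ge 0$ and $\mathbf h_2\not\ge 0$. Then $R(J_{n,2}\mathbf h)\ge 3+R_{n-1,2}$.
   Context: For a real vector $\mathbf x$, $R(\mathbf x)$ is the number of nonzero components; inequalities are componentwise and $\mathbf x\not\ge0$ means some component is negative. $J_{m,j}$ is the matrix, with respect to the left lexicographic bases of degree-$j$ and degree-$(j+1)$ monomials in $m$ variables, of multiplication by the sum of the variables. If $\mathbf h$ is the coordinate vector of $A(x)=x_1^2A_0+x_1A_1(x_2,\dots,x_n)+A_2(x_2,\dots,x_n)$ ($A_j$ homogeneous of degree $j$), $\mathbf h_j$ is the coordinate vector of $A_j$ in the left lexicographic basis of degree-$j$ monomials in $x_2,\dots,x_n$. For $m,d\ge1$, $R_{m,d}:=\min\{R(J_{m,d}\mathbf g): \mathbf g\in\mathbb{R}^{\binom{m+d-1}{d}},\ \mathbf g\not\ge 0,\ J_{m,d}\mathbf g\ge 0\}$. *)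

From HB Require Import structures.
From mathcomp Require Import all_boot all_order all_algebra.
From mathcomp Require Import mpoly.
From mathcomp Require Import reals.
From Stdlib Require Import ClassicalEpsilon.

Set Implicit Arguments. Unset Strict Implicit. Unset Printing Implicit Defensive.
Import Order.TTheory GRing.Theory Num.Theory.
Local Open Scope ring_scope.

Definition sumX (R : realType) (m : nat) : {mpoly R[m]} := \sum_(i < m) 'X_i.

(* A homogeneous polynomial of degree d in m variables is identified with its
   coordinate vector g in R^{binom(m+d-1,d)} (coefficients on the degree-d
   monomials); the vector J_{m,d} g is the coordinate vector of (sumX m) * g
   on the degree-(d+1) monomials. *)
Definition Jmul (R : realType) (m : nat) (g : {mpoly R[m]}) : {mpoly R[m]} :=
  sumX R m * g.

Definition vnonneg (R : realType) (m : nat) (p : {mpoly R[m]}) : Prop :=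
  forall mm : 'X_{1..m}, 0 <= p@_mm.

Definition Rcount (R : realType) (m : nat) (p : {mpoly R[m]}) : nat :=
  size (msupp p).

Definition Rvalue (R : realType) (m d k : nat) : Prop :=
  exists g : {mpoly R[m]},
    [/\ g \is d.-homog, ~ vnonneg g, vnonneg (Jmul g) & Rcount (Jmul g) = k].

Definition Rvalueb (R : realType) (m d : nat) : pred nat :=
  fun k => if excluded_middle_informative (Rvalue R m d k) then true else false.

Lemma Rvalueb_ex (R : realType) (m d : nat) :
  (exists k, Rvalue R m d k) -> exists k, Rvalueb R m d k.
Proof.
move=> [k Hk]; exists k; rewrite /Rvalueb.
by case: excluded_middle_informative.
Qed.

(* R_{m,d} := min { R(J_{m,d} g) : g not >= 0, J_{m,d} g >= 0 }
   (set to 0 if the set is empty, which never happens for m >= 2). *)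
Definition Rmin (R : realType) (m d : nat) : nat :=
  match excluded_middle_informative (exists k, Rvalue R m d k) with
  | left H => ex_minn (Rvalueb_ex H)
  | right _ => 0%N
  end.

From HB Require Import structures.
From mathcomp Require Import all_boot all_order all_algebra.
From mathcomp Require Import mpoly.
From mathcomp Require Import reals.
From mathcomp Require Import lra zify.
From Stdlib Require Import ClassicalEpsilon.
Set Implicit Arguments. Unset Strict Implicit. Unset Printing Implicit Defensive.
Import Order.TTheory GRing.Theory Num.Theory.
Local Open Scope ring_scope.

(* Index the variables from 0 and split A = x_0^2 A_0 + x_0 A_1 + A_2.  On the
   monomials free of x_0, the coefficients of (x_0 + ... + x_{n-1}) A are those
   of (x_1 + ... + x_{n-1}) A_2; since A_2 has a negative coefficient, these
   alone contribute at least R_{n-1,2} nonzero entries.  It remains to find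
   three nonzero coefficients on monomials divisible by x_0.  Nonnegativity at
   the monomial x_0 x_u x_v, where A_2 has its negative coefficient, forces a
   positive coefficient of A at some x_0 x_w; then x_0^2 x_w and x_0 x_w^2 get
   positive coefficients, and a third nonzero one is found among x_0^3,
   x_0 x_w x_k and x_0 x_k^2 for any k distinct from 0 and w. *)

Lemma exists_ord_neq2 n (a b : 'I_n) : (2 < n)%N -> exists2 k : 'I_n, k != a & k != b.
Proof.
move=> n_gt2; have := cardsC [set a; b]; rewrite card_ord cards2 => card_compl.
have /card_gt0P [k] : (0 < #|~: [set a; b]|)%N.
  by move: card_compl; case: (a != b); lia.
by rewrite !inE negb_or => /andP [ka kb]; exists k.
Qed.

Section JmulCoef.
Variables (R : realType) (n : nat).
Implicit Types (p : {mpoly R[n]}) (m : 'X_{1..n}).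

Definition mnm2 (a b : 'I_n) : 'X_{1..n} := (U_(a) + U_(b))%MM.
Definition mnm3 (a b c : 'I_n) : 'X_{1..n} := (U_(a) + U_(b) + U_(c))%MM.

Lemma mnm2C a b : mnm2 a b = mnm2 b a.
Proof. by rewrite /mnm2 addmC. Qed.

Lemma mdeg2_mnm2 m : mdeg m = 2%N -> exists a b, m = mnm2 a b.
Proof.
move=> m2; have [a ma|m0] := pickP (fun i => 0 < m i)%N; last first.
  suff m_eq0 : m = 0%MM by move: m2; rewrite m_eq0 mdeg0.
  by apply/mnmP => i; rewrite mnm0E; apply/eqP; rewrite -leqn0 leqNgt m0.
have Ua_le : (U_(a) <= m)%MM.
  by apply/mnm_lepP => i; rewrite mnm1E; case: eqP => [<-|]; lia.
have /mdeg1P [b /eqP mb] : mdeg (m - U_(a)) == 1%N.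
  by have := mdegD (m - U_(a)) U_(a); rewrite submK // m2 mdeg1; lia.
by exists a, b; rewrite /mnm2 -mb addmC submK.
Qed.

Lemma mcoeff_XiM p (i : 'I_n) m :
  ('X_i * p)@_m = if (0 < m i)%N then p@_(m - U_(i))%MM else 0.
Proof.
rewrite -commr_mpolyX; case: ifP => mi.
  have Ui_le : (U_(i) <= m)%MM.
    by apply/mnm_lepP => j; rewrite mnm1E; case: eqP => [<-|]; lia.
  by rewrite -{1}(submK Ui_le) addmC mcoeffMX.
apply/eqP; rewrite mcoeff_eq0 (perm_mem (msuppMX _ _)); apply/negP.
by case/mapP => m' _ Em; move: mi; rewrite Em mnmDE mnm1E eqxx.
Qed.

Lemma mcoeff_Jmul p m :
  (Jmul p)@_m = \sum_(i < n) (if (0 < m i)%N then p@_(m - U_(i))%MM else 0).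
Proof.
rewrite /Jmul /sumX mulr_suml raddf_sum /=.
by apply: eq_bigr => i _; rewrite mcoeff_XiM.
Qed.

Lemma mnm3_pos a b c i : (0 < mnm3 a b c i)%N = (i \in [:: a; b; c]).
Proof.
rewrite !mnmDE !mnm1E !inE ![i == _]eq_sym.
by case: (a == i); case: (b == i); case: (c == i).
Qed.

Lemma mnm3_subl a b c : (mnm3 a b c - U_(a))%MM = mnm2 b c.
Proof. by apply/mnmP => i; rewrite !(mnmBE, mnmDE, mnm1E); lia. Qed.

Lemma mnm3_subm a b c : (mnm3 a b c - U_(b))%MM = mnm2 a c.
Proof. by apply/mnmP => i; rewrite !(mnmBE, mnmDE, mnm1E); lia. Qed.

Lemma mnm3_subr a b c : (mnm3 a b c - U_(c))%MM = mnm2 a b.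
Proof. by apply/mnmP => i; rewrite !(mnmBE, mnmDE, mnm1E); lia. Qed.

Lemma mcoeff_Jmul_mnm3 p a b c (r : seq 'I_n) : uniq r -> [:: a; b; c] =i r ->
  (Jmul p)@_(mnm3 a b c) = \sum_(i <- r) p@_(mnm3 a b c - U_(i))%MM.
Proof.
move=> r_uniq abc_r; rewrite mcoeff_Jmul -big_mkcond big_uniq //=.
by apply: eq_bigl => i; rewrite mnm3_pos abc_r.
Qed.

Lemma mcoeff_Jmul_distinct p a b c : a != b -> a != c -> b != c ->
  (Jmul p)@_(mnm3 a b c) = p@_(mnm2 b c) + p@_(mnm2 a c) + p@_(mnm2 a b).
Proof.
move=> ab ac bc; rewrite (@mcoeff_Jmul_mnm3 p a b c [:: a; b; c]) //=; last first.
  by rewrite !inE negb_or ab ac bc.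
by rewrite !big_cons big_nil addr0 addrA mnm3_subl mnm3_subm mnm3_subr.
Qed.

Lemma mcoeff_Jmul_sqr p a c : a != c ->
  (Jmul p)@_(mnm3 a a c) = p@_(mnm2 a c) + p@_(mnm2 a a).
Proof.
move=> ac; rewrite (@mcoeff_Jmul_mnm3 p a a c [:: a; c]) /=; last 2 first.
- by rewrite inE ac.
- by move=> i; rewrite !inE; case: (i == a).
by rewrite !big_cons big_nil addr0 mnm3_subl mnm3_subr.
Qed.

Lemma mcoeff_Jmul_cube p a : (Jmul p)@_(mnm3 a a a) = p@_(mnm2 a a).
Proof.
rewrite (@mcoeff_Jmul_mnm3 p a a a [:: a]) //; last first.
  by move=> i; rewrite !inE; case: (i == a).
by rewrite big_seq1 mnm3_subl.
Qed.

End JmulCoef.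

Section NonnegativeJmul.
Variables (R : realType) (n : nat) (A : {mpoly R[n]}).
Hypothesis JA_ge0 : vnonneg (Jmul A).

Lemma mcoeff_sqr_ge0 a : 0 <= A@_(mnm2 a a).
Proof. by rewrite -mcoeff_Jmul_cube. Qed.

Lemma mcoeff_Jmul_sqr_gt0 a c : a != c -> 0 < A@_(mnm2 a c) ->
  0 < (Jmul A)@_(mnm3 a a c).
Proof.
by move=> ac Aac; rewrite mcoeff_Jmul_sqr // ltr_pwDl ?mcoeff_sqr_ge0.
Qed.

Lemma exists_mixed_gt0 a u v : a != u -> a != v -> A@_(mnm2 u v) < 0 ->
  exists2 w, a != w & 0 < A@_(mnm2 a w).
Proof.
move=> au av; have [<- Auu|uv Auv] := eqVneq u v.
  exists u => //; have := JA_ge0 (mnm3 u u a).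
  by rewrite mcoeff_Jmul_sqr 1?eq_sym // mnm2C; lra.
have := JA_ge0 (mnm3 a u v); rewrite mcoeff_Jmul_distinct // => Jauv.
have [Aau|Aau] := ltrP 0 (A@_(mnm2 a u)); first by exists u.
by exists v => //; lra.
Qed.

Lemma Jmul_third_neq0 a w k : a != w -> a != k -> w != k ->
  0 < A@_(mnm2 a w) -> A@_(mnm2 a a) = 0 ->
  (Jmul A)@_(mnm3 a w k) != 0 \/ (Jmul A)@_(mnm3 k k a) != 0.
Proof.
move=> aw ak wk Aaw Aaa.
have := JA_ge0 (mnm3 k k w); rewrite mcoeff_Jmul_sqr 1?eq_sym // => Jkkw.
have := JA_ge0 (mnm3 a a k); rewrite mcoeff_Jmul_sqr // => Jaak.
rewrite mcoeff_Jmul_distinct // mcoeff_Jmul_sqr 1?eq_sym //.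
rewrite [mnm2 k a]mnm2C [mnm2 k w]mnm2C in Jkkw *.
(* If both vanished, nonnegativity at x_k^2 x_w and x_a^2 x_k would give
   A(wk) >= -A(kk) = A(ak) >= 0, hence A(aw) <= 0. *)
have [J_awk|] := eqVneq (A@_(mnm2 w k) + A@_(mnm2 a k) + A@_(mnm2 a w)) 0;
  last by left.
by right; apply/eqP => J_kka; lra.
Qed.

End NonnegativeJmul.

Lemma Jmul_three_supp (R : realType) n (A : {mpoly R[n]}) (a w : 'I_n) :
  (2 < n)%N -> vnonneg (Jmul A) -> a != w -> 0 < A@_(mnm2 a w) ->
  exists s : seq 'X_{1..n}, [/\ size s = 3%N, uniq s,
    all (fun m : 'X_{1..n} => 0 < m a)%N s & all (fun m => m \in msupp (Jmul A)) s].
Proof.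
move=> n_gt2 JA_ge0 aw Aaw; have wa : w != a by rewrite eq_sym.
(* The exponents of (x_a, x_w) in x_a^2 x_w and x_w^2 x_a are (2,1) and (1,2). *)
suff [m3 [m3_new m3a m3_supp]] : exists m3 : 'X_{1..n},
    [/\ (m3 a, m3 w) \notin [:: (2, 1); (1, 2)]%N, (0 < m3 a)%N & (Jmul A)@_m3 != 0].
  exists [:: mnm3 a a w; mnm3 w w a; m3]; split => //.
  - apply: (@map_uniq _ _ (fun m : 'X_{1..n} => (m a, m w))); move: m3_new.
    rewrite /= /mnm3 !mnmDE !mnm1E !eqxx (negbTE aw) (negbTE wa) !inE andbT.
    by case/norP => n21 n12; rewrite ![_ == (m3 a, m3 w)]eq_sym n21 n12.
  - by rewrite /= /mnm3 !mnmDE !mnm1E !eqxx (negbTE wa) m3a.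
  - apply/allP => m; rewrite !inE mcoeff_msupp => /or3P [] /eqP ->.
    + by apply/lt0r_neq0/mcoeff_Jmul_sqr_gt0.
    + by apply/lt0r_neq0/mcoeff_Jmul_sqr_gt0; rewrite // mnm2C.
    + exact: m3_supp.
have [Aaa|] := ltrP 0 (A@_(mnm2 a a)).
  exists (mnm3 a a a); rewrite mcoeff_Jmul_cube lt0r_neq0 //.
  by rewrite /mnm3 !mnmDE !mnm1E !eqxx (negbTE aw).
move=> Aaa_le0; have Aaa : A@_(mnm2 a a) = 0.
  by apply/le_anti; rewrite Aaa_le0 mcoeff_sqr_ge0.
have [k ka kw] := exists_ord_neq2 a w n_gt2.
have neqs := (negbTE aw, negbTE wa, negbTE ka, negbTE kw).
have [ak wk] : a != k /\ w != k by rewrite ![_ == k]eq_sym.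
have [Jawk|Jkka] := Jmul_third_neq0 JA_ge0 aw ak wk Aaw Aaa.
  by exists (mnm3 a w k); rewrite Jawk /mnm3 !mnmDE !mnm1E !eqxx !neqs.
by exists (mnm3 k k a); rewrite Jkka /mnm3 !mnmDE !mnm1E !eqxx !neqs.
Qed.

Section LiftMonomials.
Variable q : nat.
Implicit Types (k : 'X_{1..q}) (m : 'X_{1..q.+1}).

Definition mlift0 k : 'X_{1..q.+1} :=
  [multinom (if unlift ord0 j is Some i then k i else 0%N) | j < q.+1].

Definition mdrop0 m : 'X_{1..q} := [multinom m (lift ord0 i) | i < q].

Lemma mlift0_ord0 k : mlift0 k ord0 = 0%N.
Proof. by rewrite mnmE unlift_none. Qed.

Lemma mlift0_lift k i : mlift0 k (lift ord0 i) = k i.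
Proof. by rewrite mnmE liftK. Qed.

Lemma mlift0K : cancel mlift0 mdrop0.
Proof. by move=> k; apply/mnmP => i; rewrite mnmE mlift0_lift. Qed.

Lemma mdrop0K m : m ord0 = 0%N -> mlift0 (mdrop0 m) = m.
Proof.
move=> m0; apply/mnmP => j; case: (unliftP ord0 j) => [i|] ->.
  by rewrite mlift0_lift mnmE.
by rewrite mlift0_ord0.
Qed.

Lemma mdeg_mlift0 k : mdeg (mlift0 k) = mdeg k.
Proof.
rewrite !mdegE big_ord_recl mlift0_ord0 add0n.
by apply: eq_bigr => i _; rewrite mlift0_lift.
Qed.

Lemma mlift0B k i : (mlift0 k - U_(lift ord0 i))%MM = mlift0 (k - U_(i))%MM.
Proof.
apply/mnmP => j; case: (unliftP ord0 j) => [j'|] ->.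
  by rewrite mnmBE !mlift0_lift mnmBE !mnm1E (inj_eq lift_inj).
by rewrite mnmBE !mlift0_ord0.
Qed.

Lemma size_msupp_mlift0 (R : realType) (p : {mpoly R[q.+1]}) (B : {mpoly R[q]})
    (s : seq 'X_{1..q.+1}) :
  (forall k, B@_k = p@_(mlift0 k)) -> uniq s ->
  all (fun m : 'X_{1..q.+1} => 0 < m ord0)%N s -> all (fun m => m \in msupp p) s ->
  (size s + size (msupp B) <= size (msupp p))%N.
Proof.
move=> Bp s_uniq s_pos /allP s_supp.
rewrite -(size_map mlift0) -size_cat; apply: uniq_leq_size.
  rewrite cat_uniq s_uniq (map_inj_uniq (can_inj mlift0K)) msupp_uniq andbT /=.
  apply/hasPn => _ /mapP [k _ ->]; apply/negP => /(allP s_pos).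
  by rewrite mlift0_ord0.
move=> m; rewrite mem_cat => /orP [/s_supp //|/mapP [k]].
by rewrite !mcoeff_msupp Bp => ? ->.
Qed.

End LiftMonomials.

Section RestrictionToHyperplane.
Variables (R : realType) (q d : nat) (A : {mpoly R[q.+1]}).
Hypothesis A_homog : A \is d.-homog.

(* The part of A free of x_0, as a polynomial in the remaining q variables
   (A_2 in the notation of the statement).  Truncating at degree d only serves
   to make the sum finite. *)
Definition restr0 : {mpoly R[q]} :=
  \sum_(k : 'X_{1..q < d.+1}) (A@_(mlift0 k) *: 'X_[k]).

Lemma mcoeff_restr0 k : restr0@_k = A@_(mlift0 k).
Proof.
have [k_small|k_big] := ltnP (mdeg k) d.+1.
  exact: (mcoeff_mpoly (fun k => A@_(mlift0 k))).
rewrite (dhomog_nemf_coeff A_homog); last by rewrite /= mdeg_mlift0; lia.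
rewrite raddf_sum big1 // => k' _ /=; rewrite mcoeffZ mcoeffX.
by case: eqP => [Ek|]; [move: (bmdeg k'); rewrite Ek; lia | rewrite mulr0].
Qed.

Lemma restr0_homog : restr0 \is d.-homog.
Proof.
apply/dhomogP => k; rewrite mcoeff_msupp mcoeff_restr0 -mcoeff_msupp.
by move/(dhomog_mf A_homog); rewrite /= mdeg_mlift0.
Qed.

Lemma mcoeff_Jmul_restr0 k : (Jmul restr0)@_k = (Jmul A)@_(mlift0 k).
Proof.
rewrite !mcoeff_Jmul big_ord_recl mlift0_ord0 add0r.
by apply: eq_bigr => i _; rewrite mlift0_lift mlift0B mcoeff_restr0.
Qed.

Lemma Rvalue_restr0 (mm : 'X_{1..q.+1}) :
  vnonneg (Jmul A) -> mm ord0 = 0%N -> A@_mm < 0 ->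
  Rvalue R q d (Rcount (Jmul restr0)).
Proof.
move=> JA_ge0 mm0 Amm; exists restr0; split => //.
- exact: restr0_homog.
- by move=> /(_ (mdrop0 mm)); rewrite mcoeff_restr0 mdrop0K // leNgt Amm.
- by move=> k; rewrite mcoeff_Jmul_restr0.
Qed.

End RestrictionToHyperplane.

Lemma Rmin_le (R : realType) m d k : Rvalue R m d k -> (Rmin R m d <= k)%N.
Proof.
move=> Rk; rewrite /Rmin.
case: excluded_middle_informative => [ex|[]]; last by exists k.
case: ex_minnP => k0 _; apply; rewrite /Rvalueb.
by case: excluded_middle_informative.
Qed.

Theorem corollary4p2 (R : realType) (n : nat) (A : {mpoly R[n]}) :
  (3 <= n)%N ->
  A \is 2.-homog ->
  vnonneg (Jmul A) ->
  (exists mm : 'X_{1..n}, (forall i : 'I_n, val i = 0%N -> mm i = 0%N) /\ A@_mm < 0) ->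
  (3 + Rmin R n.-1 2 <= Rcount (Jmul A))%N.
Proof.
case: n A => [|q] A // n_ge3 A_homog JA_ge0 [mm [mm0 Amm]].
have {}mm0 : mm ord0 = 0%N by exact: mm0.
have A2_value := Rvalue_restr0 A_homog JA_ge0 mm0 Amm.
have [u [v Emm]] : exists u v, mm = mnm2 u v.
  by apply/mdeg2_mnm2/(dhomog_mf A_homog); rewrite mcoeff_msupp ltr0_neq0.
have [u0 v0] : ord0 != u /\ ord0 != v.
  by move: mm0; rewrite Emm /mnm2 mnmDE !mnm1E !(eq_sym ord0); case: eqP; case: eqP.
rewrite Emm in Amm.
have [w w0 Aw] := exists_mixed_gt0 JA_ge0 u0 v0 Amm.
have [s [<- s_uniq s_x0 s_supp]] := Jmul_three_supp n_ge3 JA_ge0 w0 Aw.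
apply: leq_trans (size_msupp_mlift0 (mcoeff_Jmul_restr0 A_homog) s_uniq s_x0 s_supp).
by rewrite leq_add2l Rmin_le.
Qed.
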